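(* For every integer $n\geq 1$ there is a bijection $\phi:\mathfrak{S}_n\to\mathfrak{S}_n$ such that for every $\sigma\in\mathfrak{S}_n$, writing $\tau=\phi(\sigma)$, we have $$\overline{\mathrm{Fix}}(\sigma)=\mathrm{Suc}(\tau),\qquad \overline{\mathrm{Drop}}(\sigma)=\mathrm{najSuc}(\tau),\qquad \overline{\mathrm{Exc}}(\sigma)=\mathrm{Pred}(\tau).$$
   Context: $\mathfrak{S}_n$ denotes the set of permutations of $[n]=\{1,\dots,n\}$, written in one-line notation $\sigma=\sigma_1\sigma_2\cdots\sigma_n$. For $\sigma\in\mathfrak{S}_n$ define: - $\mathrm{Suc}(\sigma)=\{1\le i\le n-1 : \sigma_i+1=\sigma_{i+1}\}$ (successions); - $\overline{\mathrm{Fix}}(\sigma)=\{1\le i\le n-1 : \sigma_i=i\}$ (fixed points other than $n$); - $\mathrm{najSuc}(\sigma)=\{1\le i\le n-2 : \text{there exists } j \text{ with } i+2\le j\le n \text{ and } \sigma_j=\sigma_i+1\}$ (non-adjacent successions); - $\mathrm{Pred}(\sigma)=\{2\le i\le n : \text{there exists } j \text{ with } 1\le j<i \text{ and } \sigma_j=\sigma_i+1\}$ (predecessors); - $\overline{\mathrm{Drop}}(\sigma)=\{\sigma_i : 1\le i\le n-1,\ \sigma_i<i\}$ (the set of values, not positions, of drops at positions other than $n$); - $\overline{\mathrm{Exc}}(\sigma)=\{\sigma_i : 1\le i\le n-1,\ \sigma_i>i\}$ (the set of values, not positions, of excedances at positions other than $n$). Example: for $\tau=4\,1\,2\,6\,7\,5\,3$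 one has $\mathrm{Suc}(\tau)=\{2,4\}$, $\mathrm{najSuc}(\tau)=\{1,3\}$, $\mathrm{Pred}(\tau)=\{6,7\}$. *)

From mathcomp Require Import all_boot all_fingroup.
Set Implicit Arguments. Unset Strict Implicit. Unset Printing Implicit Defensive.

(* A permutation s : 'S_n (of {0,..,n-1}) represents sigma in S_n (of [n])
   via sigma_i = (s (i-1)) + 1.  [oneline s i] is sigma_i for 1 <= i <= n
   (and 0 outside that range, never used). *)
Definition oneline n (s : 'S_n) (i : nat) : nat :=
  match insub i.-1 : option 'I_n with Some j => (s j).+1 | None => 0 end.

Definition Suc n (s : 'S_n) : pred nat :=
  fun i => [&& 1 <= i, i <= n - 1 & (oneline s i).+1 == oneline s i.+1].

Definition Fixbar n (s : 'S_n) : pred nat :=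
  fun i => [&& 1 <= i, i <= n - 1 & oneline s i == i].

Definition najSuc n (s : 'S_n) : pred nat :=
  fun i => [&& 1 <= i, i <= n - 2 &
    [exists j : 'I_n, (i + 2 <= j.+1) && (oneline s j.+1 == (oneline s i).+1)]].

Definition Pred n (s : 'S_n) : pred nat :=
  fun i => [&& 2 <= i, i <= n &
    [exists j : 'I_n, (j.+1 < i) && (oneline s j.+1 == (oneline s i).+1)]].

Definition Dropbar n (s : 'S_n) : pred nat :=
  fun v => [exists i : 'I_n, [&& i.+1 <= n - 1, oneline s i.+1 < i.+1
                                & oneline s i.+1 == v]].

Definition Excbar n (s : 'S_n) : pred nat :=
  fun v => [exists i : 'I_n, [&& i.+1 <= n - 1, i.+1 < oneline s i.+1
                                & oneline s i.+1 == v]].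

(* Write t = tau and p = tau^-1 on 0-indexed positions and values, and
   top = p (n-1).  For x <> top let succ_pos x = p (t x + 1).  Position x+1 of
   tau (1-indexed) is a succession, a non-adjacent succession or a predecessor
   according as succ_pos x = x+1, succ_pos x >= x+2 or succ_pos x < x.  If sigma
   carries the value x+1 at the 1-indexed position c, then x+1 is a fixed point,
   a drop value or an excedance value according as c = x+1, c >= x+2 or c <= x.
   So sigma = psi tau is obtained by putting top+1 last and each other x+1 at
   position code x, for any bijection code from the x <> top onto [1, n) that
   compares with x+1 as succ_pos does.
   succ_pos is a bijection onto the positions other than p 0, and may hit 0.  It
   is repaired on band peaks: the peak of the band [k, t 0) is the rightmost
   position carrying a value in it, and a peak x of the band [t x, t 0) is sent
   to p k for the least k whose band has peak x.  Band peaks are predecessors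
   and are sent to positions <= x, so the comparisons are preserved.
   tau is recovered from code and top: iterating code from position 0 visits the
   positions of t 0, ..., n-1 in turn, which determines t 0, and the positions
   of 0, 1, ..., t 0 - 1 are then found one after the other.  Hence psi is
   injective, so bijective, and phi is its inverse. *)

From mathcomp Require Import zify.
From mathcomp Require Import all_boot all_fingroup.
Set Implicit Arguments. Unset Strict Implicit. Unset Printing Implicit Defensive.

Section Positions.
Variable m : nat.
Local Notation N := m.+1.
Variable tau : 'S_N.

(* tau and its inverse as 0-indexed functions on nat; arguments >= N are read as 0. *)
Definition tval i : nat := tau (inord i).
Definition tpos k : nat := (tau^-1)%g (inord k).

Lemma tval_lt i : tval i < N. Proof. exact: ltn_ord. Qed.
Lemma tpos_lt k : tpos k < N. Proof. exact: ltn_ord. Qed.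

Lemma tvalK i : i < N -> tpos (tval i) = i.
Proof. by move=> lt_iN; rewrite /tpos /tval inord_val permK inordK. Qed.

Lemma tposK k : k < N -> tval (tpos k) = k.
Proof. by move=> lt_kN; rewrite /tpos /tval inord_val permKV inordK. Qed.

Lemma tval_inj x y : x < N -> y < N -> tval x = tval y -> x = y.
Proof. by move=> xN yN e; rewrite -(tvalK xN) -(tvalK yN) e. Qed.

Lemma tpos_inj k l : k < N -> l < N -> tpos k = tpos l -> k = l.
Proof. by move=> kN lN e; rewrite -(tposK kN) -(tposK lN) e. Qed.

Lemma tval_eq_tpos i k : i < N -> k < N -> (tval i == k) = (tpos k == i).
Proof. by move=> iN kN; apply/eqP/eqP => <-; rewrite ?tvalK ?tposK. Qed.

Lemma oneline_tval i : i < N -> oneline tau i.+1 = (tval i).+1.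
Proof.
move=> lt_iN; rewrite /oneline /= insubT /tval /=; congr (_.+1); congr (tau _).
by apply: val_inj; rewrite /= inordK.
Qed.
End Positions.

Arguments tval_lt {m} tau i.
Arguments tpos_lt {m} tau k.
Arguments tvalK {m tau i}.
Arguments tposK {m tau k}.
Arguments tval_inj {m tau x y}.
Arguments tpos_inj {m tau k l}.
Arguments tval_eq_tpos {m} tau i k.

Lemma eq_perm_tpos m (tau tau' : 'S_m.+1) :
  (forall k, k < m.+1 -> tpos tau k = tpos tau' k) -> tau = tau'.
Proof.
move=> epos; apply: (can_inj invgK); apply/permP => k; apply: val_inj.
by have := epos k (ltn_ord k); rewrite /tpos inord_val.
Qed.

Section Code.
Variable m : nat.
Local Notation N := m.+1.
Variable tau : 'S_N.
Local Notation t := (tval tau).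
Local Notation p := (tpos tau).

Definition top := p N.-1.

Lemma eq_top x : x < N -> (x == top) = (t x == N.-1).
Proof.
move=> xN; rewrite /top; apply/eqP/eqP => [->|<-]; first exact: tposK.
by rewrite tvalK.
Qed.

Definition succ_pos x := p (t x).+1.

Lemma succ_posP x y : x < N -> x != top -> y < N ->
  (t y == (t x).+1) = (y == succ_pos x).
Proof.
move=> xN; rewrite eq_top // => xtop yN.
have lt_sN : (t x).+1 < N by have := tval_lt tau x; lia.
by rewrite /succ_pos; apply/eqP/eqP => [<-|->]; [rewrite tvalK | rewrite tposK].
Qed.

Lemma succ_pos_neq x : x < N -> x != top -> succ_pos x != x.
Proof. by move=> xN xtop; rewrite eq_sym -succ_posP //; lia. Qed.

Definition in_band k x := (x < N) && (k <= t x < t 0).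
Definition band_max k := \max_(x < N | in_band k x) (x : nat).
Definition band_peak x := (t x < t 0) && (band_max (t x) == x).
Definition band_low x := find (fun j => band_max j == x) (iota 0 N).

Lemma in_bandE k x : x < N ->
  in_band k x = ~~ [exists j : 'I_N, ((j < k) || (t 0 <= j)) && (p j == x)].
Proof.
move=> xN; rewrite /in_band xN /=; apply/andP/existsPn => [[le_kx lt_x0] j|none].
- apply/negP => /andP[out /eqP pj]; move: le_kx lt_x0 out.
  by rewrite -pj tposK //; lia.
- have := none (Ordinal (tval_lt tau x)); rewrite /= tvalK // eqxx andbT.
  by case/norP; lia.
Qed.

Lemma tpos_in_band k j : k <= j -> j < t 0 -> in_band k (p j).
Proof.
move=> le_kj lt_j0; have jN : j < N by have := tval_lt tau 0; lia.
by rewrite /in_band (tpos_lt tau) tposK // le_kj.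
Qed.

Lemma below_head_not_top x : x < N -> t x < t 0 -> x != top.
Proof. by move=> xN lt_x0; rewrite eq_top //; have := tval_lt tau 0; lia. Qed.

Lemma leq_band_max k x : in_band k x -> x <= band_max k.
Proof.
move=> bx; have xN : x < N by case/andP: bx.
exact: (leq_bigmax_cond (Ordinal xN) (P := fun y : 'I_N => in_band k y)
                        (F := fun y : 'I_N => val y)).
Qed.

Lemma band_max_in k : k < t 0 -> in_band k (band_max k).
Proof.
move=> lt_k0; have kN : k < N by have := tval_lt tau 0; lia.
have bk : in_band k (p k) by rewrite /in_band (tpos_lt tau) tposK //= leqnn.
rewrite /band_max (bigmax_eq_arg (Ordinal (tpos_lt tau k))) //.
by case: arg_maxnP.
Qed.

Lemma band_max_antimono k l : k <= l -> band_max l <= band_max k.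
Proof.
move=> le_kl; apply/bigmax_leqP => x /and3P[_ le_lx lt_x0].
by apply: leq_band_max; rewrite /in_band ltn_ord lt_x0 andbT (leq_trans le_kl).
Qed.

Lemma band_max_peak k : k < t 0 -> band_peak (band_max k) /\ k <= t (band_max k).
Proof.
move=> lt_k0; have /and3P[mN le_k lt_0] := band_max_in lt_k0.
split=> //; apply/andP; split=> //; rewrite eqn_leq band_max_antimono //=.
by apply: leq_band_max; rewrite /in_band mN leqnn.
Qed.

Lemma band_max_single k : k.+1 = t 0 -> band_max k = p k.
Proof.
move=> e; have /and3P[mN le_k lt_0] := band_max_in (k := k) ltac:(lia).
by rewrite -{1}(tvalK (tau := tau) mN); congr (p _); lia.
Qed.

Lemma band_lowP x : x < N -> band_peak x ->
  [/\ band_low x <= t x, band_max (band_low x) = x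
    & forall j, j < band_low x -> band_max j != x].
Proof.
move=> xN /andP[lt_x0 /eqP maxx].
have hasx : has (fun j => band_max j == x) (iota 0 N).
  by apply/hasP; exists (t x); [rewrite mem_iota (tval_lt tau) | apply/eqP].
have lowN : band_low x < N by move: hasx; rewrite has_find size_iota.
have below j : j < band_low x -> band_max j != x.
  move=> lt_j; have := before_find 0 lt_j.
  by rewrite nth_iota /= => [->|]; last lia.
split=> //.
- by rewrite leqNgt; apply/negP => /below; rewrite maxx eqxx.
- by have := nth_find 0 hasx; rewrite nth_iota // => /eqP.
Qed.

Lemma band_low_max k : k < t 0 ->
  (forall j, j < k -> band_max j != band_max k) -> band_low (band_max k) = k.
Proof.
move=> lt_k0 fresh; have mN : band_max k < N by case/andP: (band_max_in lt_k0).
have [peak_m le_k] := band_max_peak lt_k0.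
have [_ max_low below] := band_lowP mN peak_m.
case: (ltngtP (band_low (band_max k)) k) => [lt_low|lt_k|//].
- by have := fresh _ lt_low; rewrite max_low eqxx.
- by have := below _ lt_k; rewrite eqxx.
Qed.

Definition code x := if band_peak x then p (band_low x) else succ_pos x.

Lemma code_lt x : code x < N.
Proof. by rewrite /code /succ_pos; case: ifP => _; apply: tpos_lt. Qed.

Lemma code_gt0 x : x < N -> x != top -> 0 < code x.
Proof.
move=> xN; rewrite eq_top // => xtop; have t0N := tval_lt tau 0; have txN := tval_lt tau x.
rewrite lt0n -(tvalK (tau := tau) (ltn0Sn m)) /code; case: ifP => [peak_x|npeak_x].
- have [le_low _ _] := band_lowP xN peak_x; have lt_x0 : t x < t 0 by case/andP: peak_x.
  by apply/eqP => /tpos_inj; lia.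
- apply/eqP => /tpos_inj e; have {}e : (t x).+1 = t 0 by apply: e; lia.
  move/negP: npeak_x; apply; rewrite /band_peak band_max_single // tvalK //.
  by rewrite eqxx andbT; lia.
Qed.

Lemma code_cases x : x < N -> x != top ->
  code x = succ_pos x \/ (code x <= x /\ succ_pos x <= x).
Proof.
move=> xN xtop; rewrite /code; case: ifP => [peak_x|_]; [right | by left].
have [le_low max_low _] := band_lowP xN peak_x.
have /andP[lt_x0 /eqP maxx] := peak_x.
split.
- by rewrite -{2}max_low; apply/leq_band_max/tpos_in_band => //; lia.
- have [lt_s0|] := ltnP (t x).+1 (t 0).
    by rewrite -{2}maxx; apply/leq_band_max/tpos_in_band.
  by move=> le_0s; rewrite /succ_pos (_ : (t x).+1 = t 0) ?tvalK //; lia.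
Qed.

Lemma code_shape x : x < N -> x != top ->
  [/\ (code x == x.+1) = (succ_pos x == x.+1),
      (x.+2 <= code x) = (x.+2 <= succ_pos x)
    & (code x <= x) = (succ_pos x < x)].
Proof.
move=> xN xtop; have /eqP := succ_pos_neq xN xtop.
by case: (code_cases xN xtop) => [->|[le_c le_s]]; split; lia.
Qed.

Lemma code_tail j : t 0 <= j -> j < N.-1 -> code (p j) = p j.+1.
Proof.
move=> le_0j lt_jN; rewrite /code /band_peak /succ_pos tposK; last lia.
by case: ifP => [/andP[]|]; first lia.
Qed.

Lemma iter_code_tail i : t 0 + i <= N.-1 -> iter i code 0 = p (t 0 + i).
Proof.
elim: i => [|i IH] le_iN; first by rewrite addn0 tvalK.
by rewrite iterS IH ?code_tail ?addnS //; lia.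
Qed.

Lemma code_band_max0 : 0 < t 0 -> code (band_max 0) = p 0.
Proof.
move=> lt_00; have [peak_m _] := band_max_peak lt_00.
by rewrite /code peak_m band_low_max.
Qed.

Lemma code_band_maxS k : k.+1 < t 0 -> p k = band_max k ->
  code (band_max k.+1) = p k.+1.
Proof.
move=> lt_k0 max_k; have [peak_m le_k] := band_max_peak lt_k0.
rewrite /code peak_m band_low_max // => j lt_jk.
have: band_max k <= band_max j by apply: band_max_antimono; lia.
have: band_max k != band_max k.+1.
  by apply/eqP => e; move: le_k; rewrite -e -max_k tposK //; have := tval_lt tau 0; lia.
have := band_max_antimono (leqnSn k); lia.
Qed.

Lemma code_off_band k : k.+1 < t 0 -> p k != band_max k ->
  code (p k) = p k.+1.
Proof.
move=> lt_k0 nmax; have t0N := tval_lt tau 0.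
rewrite /code /band_peak /succ_pos tposK; last lia.
by case: ifP => // /andP[_ /eqP e]; rewrite e eqxx in nmax.
Qed.

(* If t x + 1 = band_low y, the peak of [t x, t 0) is not x, hence it is also the
   peak of [band_low y, t 0), that is y: this contradicts the minimality of band_low y. *)
Lemma code_nonpeak_peak x y : x < N -> y < N -> x != top ->
  ~~ band_peak x -> band_peak y -> code x != code y.
Proof.
move=> xN yN xtop npeak_x peak_y; have [le_low max_low below] := band_lowP yN peak_y.
have lt_y0 : t y < t 0 by case/andP: peak_y.
rewrite /code (negbTE npeak_x) peak_y /succ_pos; apply/eqP => /tpos_inj e.
have {}e : (t x).+1 = band_low y.
  apply: e; move: xtop; rewrite eq_top //; have := tval_lt tau x; have := tval_lt tau 0; lia.
have lt_x0 : t x < t 0 by lia.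
have /and3P[mN le_x lt_m0] := band_max_in lt_x0.
have: band_max (t x) != x by apply: contraNneq npeak_x => mx; rewrite /band_peak lt_x0 mx eqxx.
have: band_max (t x) != y by apply: below; lia.
have: y <= band_max (t x) by rewrite -max_low; apply: band_max_antimono; lia.
have: band_max (t x) <= y.
  rewrite -max_low; apply: leq_band_max.
  rewrite /in_band mN lt_m0 andbT -e ltn_neqAle le_x andbT.
  by apply: contraNneq npeak_x => /(tval_inj xN mN) xM; rewrite /band_peak lt_x0 -xM eqxx.
lia.
Qed.

Lemma code_inj x y : x < N -> y < N -> x != top -> y != top -> code x = code y -> x = y.
Proof.
move=> xN yN xtop ytop.
case: (boolP (band_peak x)) => peak_x; case: (boolP (band_peak y)) => peak_y.
- have [lex max_x _] := band_lowP xN peak_x; have [ley max_y _] := band_lowP yN peak_y.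
  rewrite /code peak_x peak_y => /tpos_inj e.
  by rewrite -max_x -max_y e //; have := tval_lt tau x; have := tval_lt tau y; lia.
- by move=> e; move: (code_nonpeak_peak yN xN ytop peak_y peak_x); rewrite e eqxx.
- by move=> e; move: (code_nonpeak_peak xN yN xtop peak_x peak_y); rewrite e eqxx.
- rewrite /code (negbTE peak_x) (negbTE peak_y) => /tpos_inj e.
  move: xtop ytop; rewrite !eq_top // => xtop ytop.
  have := tval_lt tau x; have := tval_lt tau y => *.
  by apply: (tval_inj (tau := tau)) => //; have := e ltac:(lia) ltac:(lia); lia.
Qed.

Definition slot x := if x == top then N.-1 else (code x).-1.

Lemma slot_lt x : slot x < N.
Proof. by rewrite /slot; case: ifP => // _; have := code_lt x; lia. Qed.

Lemma slot_eq_top x : x < N -> (slot x == N.-1) = (x == top).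
Proof.
move=> xN; rewrite /slot; case: (eqVneq x top) => [_|xtop]; first by rewrite eqxx.
by have := code_lt x; have := code_gt0 xN xtop; lia.
Qed.

Lemma slotK x : x < N -> x != top -> (slot x).+1 = code x.
Proof. by move=> xN xtop; rewrite /slot (negbTE xtop); have := code_gt0 xN xtop; lia. Qed.

Lemma slot_inj x y : x < N -> y < N -> slot x = slot y -> x = y.
Proof.
move=> xN yN; rewrite /slot.
have := code_lt x; have := code_lt y.
case: eqP => [->|/eqP xtop]; case: eqP => [->|/eqP ytop] //.
- by have := code_gt0 yN ytop; lia.
- by have := code_gt0 xN xtop; lia.
- move=> _ _ e; apply: code_inj => //.
  by have := code_gt0 xN xtop; have := code_gt0 yN ytop; lia.
Qed.

Definition slot_ord (x : 'I_N) : 'I_N := inord (slot x).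

Lemma slot_ord_inj : injective slot_ord.
Proof.
move=> x y /(congr1 val); rewrite /= !inordK ?slot_lt //.
move=> /(slot_inj (ltn_ord x) (ltn_ord y)).
exact: val_inj.
Qed.

Definition psi : 'S_N := ((perm slot_ord_inj)^-1)%g.

Lemma tpos_psi x : x < N -> tpos psi x = slot x.
Proof. by move=> xN; rewrite /tpos /psi invgK permE /slot_ord inordK ?slot_lt // inordK. Qed.

Lemma psi_value_existsE (P : nat -> nat -> bool) v :
  [exists i : 'I_N, [&& i.+1 <= N - 1, P i.+1 (oneline psi i.+1) & oneline psi i.+1 == v]]
  = [&& 0 < v, v.-1 < N, v.-1 != top & P (code v.-1) v].
Proof.
apply/existsP/idP => [[i /and3P[le_iN]]|/and4P[v_gt0 xN xtop Pv]].
- rewrite oneline_tval // => Pi /eqP <- /=.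
  have xN := tval_lt psi i; have := tval_eq_tpos psi i _ (ltn_ord i) xN.
  rewrite eqxx tpos_psi // => /esym/eqP slot_x.
  have xtop : tval psi i != top by apply/eqP => xt; move: slot_x; rewrite xt /slot eqxx; lia.
  by rewrite xN xtop -slotK // slot_x.
- have cN := code_lt v.-1.
  have psi_v : oneline psi (code v.-1) = v.
    rewrite -slotK // oneline_tval ?slot_lt //.
    have /eqP -> : tval psi (slot v.-1) == v.-1 by rewrite tval_eq_tpos ?slot_lt // tpos_psi.
    by rewrite prednK.
  exists (Ordinal (slot_lt v.-1)); rewrite /= slotK // psi_v Pv eqxx andbT; lia.
Qed.

Lemma tau_succ_existsE (Q : nat -> bool) x : x < N ->
  [exists j : 'I_N, Q j.+1 && (oneline tau j.+1 == (oneline tau x.+1).+1)]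
  = (x != top) && Q (succ_pos x).+1.
Proof.
move=> xN; rewrite oneline_tval //.
case: (eqVneq x top) => [xtop|xtop] /=.
- apply/existsP => -[j]; rewrite oneline_tval // eqSS.
  move/eqP: xtop; rewrite eq_top // => /eqP ->.
  by have := tval_lt tau j; lia.
- apply/existsP/idP => [[j]|Qs].
  + by rewrite oneline_tval // eqSS succ_posP // => /andP[Qj /eqP <-].
  + have lt_sN : (t x).+1 < N by move: xtop; rewrite eq_top //; have := tval_lt tau x; lia.
    exists (Ordinal (tpos_lt tau (t x).+1)).
    by rewrite /= Qs oneline_tval ?(tpos_lt tau) // tposK // eqxx.
Qed.

Lemma Fixbar_psi k : Fixbar psi k = Suc tau k.
Proof.
rewrite /Fixbar /Suc; case: k => [//|x] /=.
have [le_xN|] := leqP x.+1 (N - 1); last by rewrite !andFb.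
have [xN x1N] : x < N /\ x.+1 < N by lia.
rewrite !oneline_tval // !eqSS tval_eq_tpos ?tpos_psi // [RHS]eq_sym /slot.
case: (eqVneq x top) => [xtop|xtop].
  by move/eqP: (xtop); rewrite eq_top // => /eqP ->; have := tval_lt tau x.+1; lia.
rewrite succ_posP // [RHS]eq_sym; have [<- _ _] := code_shape xN xtop.
by have := code_gt0 xN xtop; lia.
Qed.

Lemma Dropbar_psi v : Dropbar psi v = najSuc tau v.
Proof.
rewrite /Dropbar (psi_value_existsE (fun i w => w < i)) /najSuc; case: v => [//|x] /=.
have [xN|le_Nx] := ltnP x N; last by apply/esym/negbTE/negP => /andP[lt_xN _]; lia.
rewrite (tau_succ_existsE (fun j => x.+1 + 2 <= j)) //.
case: (eqVneq x top) => [->|xtop]; first by rewrite !andbF.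
have [_ -> _] := code_shape xN xtop; have := tpos_lt tau (t x).+1.
rewrite /succ_pos; lia.
Qed.

Lemma Excbar_psi v : Excbar psi v = Pred tau v.
Proof.
rewrite /Excbar (psi_value_existsE (fun i w => i < w)) /Pred; case: v => [//|x] /=.
have [xN|le_Nx] := ltnP x N; last by apply/esym/negbTE/negP => /and3P[_ le_xN _]; lia.
rewrite (tau_succ_existsE (fun j => j < x.+1)) //.
case: (eqVneq x top) => [->|xtop]; first by rewrite !andbF.
rewrite ltnS; have [_ _ ->] := code_shape xN xtop.
rewrite /succ_pos; lia.
Qed.
End Code.

Section Uniqueness.
Variable m : nat.
Local Notation N := m.+1.

Definition same_code (tau tau' : 'S_N) :=
  top tau = top tau' /\ forall x, x < N -> x != top tau -> code tau x = code tau' x.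

Lemma same_code_sym tau tau' : same_code tau tau' -> same_code tau' tau.
Proof. by case=> etop ecode; split=> // x xN; rewrite -etop => xtop; rewrite ecode. Qed.

Lemma iter_code_eq tau tau' i : same_code tau tau' ->
  tval tau 0 + i <= N.-1 -> tval tau' 0 + i <= N.-1 ->
  iter i (code tau) 0 = iter i (code tau') 0.
Proof.
case=> _ ecode; elim: i => [//|i IH] le_i le_i'.
rewrite !iterS -IH ?ecode ?iter_code_tail ?(tpos_lt tau) //; try lia.
by rewrite eq_top ?(tpos_lt tau) // tposK; lia.
Qed.

Lemma tval0_same_code_le tau tau' : same_code tau tau' ->
  tval tau' 0 <= tval tau 0 -> tval tau' 0 = tval tau 0.
Proof.
move=> same le_0; have [etop _] := same; have t0N := tval_lt tau 0.
have := iter_code_eq (i := N.-1 - tval tau 0) same ltac:(lia) ltac:(lia).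
rewrite !iter_code_tail ?subnKC; try lia.
by rewrite -/(top tau) etop => /tpos_inj; lia.
Qed.

Lemma tval0_same_code tau tau' : same_code tau tau' -> tval tau 0 = tval tau' 0.
Proof.
move=> same; case: (leqP (tval tau' 0) (tval tau 0)) => [|/ltnW].
- by move/(tval0_same_code_le same).
- by move/(tval0_same_code_le (same_code_sym same)).
Qed.

Variables tau tau' : 'S_N.
Hypothesis same : same_code tau tau'.

Lemma tpos_tail_eq j : tval tau 0 <= j -> j < N -> tpos tau j = tpos tau' j.
Proof.
move=> le_0j lt_jN; have e0 := tval0_same_code same.
have := iter_code_eq (i := j - tval tau 0) same ltac:(lia) ltac:(lia).
by rewrite !iter_code_tail -?e0 ?subnKC //; lia.
Qed.

Lemma band_max_eq k : (forall j, j < k -> tpos tau j = tpos tau' j) ->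
  band_max tau k = band_max tau' k.
Proof.
move=> ehead; apply: eq_bigl => x; rewrite !in_bandE // -(tval0_same_code same).
congr (~~ _); apply: eq_existsb => j; case: orP => //= out.
by case: out => [/ehead -> | le_0j]; rewrite ?(tpos_tail_eq le_0j (ltn_ord j)).
Qed.

Lemma tpos_head_eq k : k < tval tau 0 -> tpos tau k = tpos tau' k.
Proof.
have [_ ecode] := same; have e0 := tval0_same_code same.
elim/ltn_ind: k => k IH lt_k0; have {}IH j : j < k -> tpos tau j = tpos tau' j.
  by move=> lt_jk; apply: IH; lia.
have /and3P[mN _ lt_m0] := band_max_in lt_k0.
have mtop := below_head_not_top mN lt_m0.
case: k => [|k] in lt_k0 IH mN lt_m0 mtop *.
  by rewrite -code_band_max0 // -(code_band_max0 (tau := tau')) -?e0 // -band_max_eq ?ecode.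
have ek := IH k (ltnSn k); have emax := band_max_eq IH.
have ktop : tpos tau k != top tau.
  by apply: below_head_not_top; rewrite ?(tpos_lt tau) // tposK //; have := tval_lt tau 0; lia.
have emax_k : band_max tau k = band_max tau' k.
  by apply: band_max_eq => i lt_ik; apply: IH; lia.
case: (eqVneq (tpos tau k) (band_max tau k)) => [max_k|nmax_k].
- rewrite -code_band_maxS // -(code_band_maxS (tau := tau')) -?e0 -?emax ?ecode //.
  by rewrite -ek -emax_k.
- rewrite -code_off_band // -(code_off_band (tau := tau')) -?e0 -?ek -?emax_k //.
  by rewrite ecode ?(tpos_lt tau).
Qed.

Lemma same_code_eq : tau = tau'.
Proof.
apply: eq_perm_tpos => k kN; case: (ltnP k (tval tau 0)).
- exact: tpos_head_eq.
- by move/tpos_tail_eq; apply.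
Qed.
End Uniqueness.

Lemma psi_same_code m (tau tau' : 'S_m.+1) : psi tau = psi tau' -> same_code tau tau'.
Proof.
move=> e; have eslot x : x < m.+1 -> slot tau x = slot tau' x.
  by move=> xN; rewrite -!tpos_psi // e.
have etop : top tau = top tau'.
  apply/eqP; rewrite -slot_eq_top ?(tpos_lt tau) // -eslot ?(tpos_lt tau) //.
  by rewrite slot_eq_top ?(tpos_lt tau).
split=> // x xN xtop; have xtop' : x != top tau' by rewrite -etop.
by rewrite -!slotK // eslot.
Qed.

Lemma psi_inj m : injective (@psi m).
Proof. by move=> tau tau' /psi_same_code/same_code_eq. Qed.

Theorem mainTheorem1 (n : nat) (hn : 1 <= n) :
  exists phi : 'S_n -> 'S_n, bijective phi /\
    forall sigma : 'S_n,
      (forall k, Fixbar sigma k = Suc (phi sigma) k) /\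
      (forall k, Dropbar sigma k = najSuc (phi sigma) k) /\
      (forall k, Excbar sigma k = Pred (phi sigma) k).
Proof.
case: n hn => [//|m] _; have inj := @psi_inj m.
exists (invF inj); split; first by exists (@psi m); [exact: f_invF | exact: invF_f].
move=> sigma; move: (invF inj sigma) (f_invF inj sigma) => tau <-.
by split; [|split] => k; [exact: Fixbar_psi | exact: Dropbar_psi | exact: Excbar_psi].
Qed.
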